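(* For $t\in\{0,1\}$ and $x\in\mathcal X$, $\Pr(Y^*=1\mid T^*=t,X^*=x)=\frac{r(x,p_0)\Pi(t\mid 1,x)}{\Pi(t\mid 0,x)+r(x,p)\{\Pi(t\mid 1,x)-\Pi(t\mid 0,x)\}}$, where $p=p_0$ under Design 1 and $p=0$ under Design 2.
   Context: Population variables: $Y^*\in\{0,1\}$, $T^*\in\{0,1\}$, covariate vector $X^*$; $p_0:=\Pr(Y^*=1)$. The observed vector $(Y,T,X)$ arises from Bernoulli sampling: $Y\in\{0,1\}$ is drawn with known probability $h_0:=\Pr(Y=1)\in(0,1)$, and given $Y=y$, $(T,X)$ is drawn from a distribution $\mathcal P_y$. Densities (or mass functions) are denoted by $f$. Design 1 (case-control): for all $t\in\{0,1\}$, $x\in\mathcal X$, $y\in\{0,1\}$, $f_{X|Y}(x\mid y)=f_{X^*|Y^*}(x\mid y)$ and $\Pr(T=t\mid X=x,Y=y)=\Pr(T^*=t\mid X^*=x,Y^*=y)$. Design 2 (case-population): for all $t,x$, $f_{X|Y}(x\mid 0)=f_{X^*}(x)$, $\Pr(T=t\mid X=x,Y=0)=\Pr(T^*=t\mid X^*=x)$, $f_{X|Y}(x\mid 1)=f_{X^*|Y^*}(x\mid 1)$, $\Pr(T=t\mid X=x,Y=1)=\Pr(T^*=t\mid X^*=x,Y^*=1)$. Standing common support assumption: the support of $X^*$ and that of $X$ given $Y=y$ for $y=0,1$ coincide; call it $\mathcal X$. Let $\Pi(t\mid y,x):=\Pr(T=t\mid Y=y,X=x)$, assumed nonzero for all $t,y$.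 For $p\in[0,1]$, under Design 1, $r(x,p):=\frac{p(1-h_0)\Pr(Y=1\mid X=x)}{p(1-h_0)\Pr(Y=1\mid X=x)+h_0(1-p)\Pr(Y=0\mid X=x)}$, and under Design 2, $r(x,p):=\frac{p(1-h_0)}{h_0}\frac{\Pr(Y=1\mid X=x)}{\Pr(Y=0\mid X=x)}$. *)

From HB Require Import structures.
From mathcomp Require Import all_boot all_order all_algebra.
From mathcomp Require Import all_classical all_reals all_analysis.
Set Implicit Arguments. Unset Strict Implicit. Unset Printing Implicit Defensive.
Import Order.TTheory GRing.Theory Num.Theory.
Local Open Scope ring_scope.

(* Convention: booleans encode {0,1}: false = 0, true = 1.
   All distributions are given by densities w.r.t. a reference measure mu on
   the covariate space X (counting measure on the binary coordinates), so that
   both the discrete ("mass function") and continuous cases are covered. *)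

Inductive design := CaseControl (* Design 1 *) | CasePopulation (* Design 2 *).

Section Defs.
Variables (R : realType) (d : measure_display) (X : measurableType d).
Variable (mu : {measure set X -> \bar R}).

(* Population: fs y t x = joint density of (Ys,Ts,Xs) [the starred population variables] at (y,t,x). *)
Definition margX (fs : bool -> bool -> X -> R) (x : X) : R :=
  fs false false x + fs false true x + fs true false x + fs true true x.

Definition is_pop_density (fs : bool -> bool -> X -> R) : Prop :=
  (forall y t x, 0 <= fs y t x) /\
  (forall y t, measurable_fun setT (fs y t)) /\
  (\int[mu]_x (margX fs x)%:E = 1)%E.

Definition PrYs (fs : bool -> bool -> X -> R) (y : bool) : R :=
  fine (\int[mu]_x (fs y false x + fs y true x)%:E)%E.

Definition p0 (fs : bool -> bool -> X -> R) : R := PrYs fs true.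

Definition fXs_Ys (fs : bool -> bool -> X -> R) (x : X) (y : bool) : R :=
  (fs y false x + fs y true x) / PrYs fs y.

Definition fXs (fs : bool -> bool -> X -> R) (x : X) : R := margX fs x.

Definition PrTs_XsYs (fs : bool -> bool -> X -> R) (t : bool) (x : X) (y : bool) : R :=
  fs y t x / (fs y false x + fs y true x).

Definition PrTs_Xs (fs : bool -> bool -> X -> R) (t : bool) (x : X) : R :=
  (fs false t x + fs true t x) / margX fs x.

Definition PrYs1_TsXs (fs : bool -> bool -> X -> R) (t : bool) (x : X) : R :=
  fs true t x / (fs false t x + fs true t x).

(* Observed sample: Y ~ Bernoulli(h0); g y t x = density of (T,X) given Y = y,
   i.e. the density of the distribution P_y. *)
Definition is_obs_density (g : bool -> bool -> X -> R) : Prop :=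
  forall y,
  (forall t x, 0 <= g y t x) /\
  (forall t, measurable_fun setT (g y t)) /\
  (\int[mu]_x (g y false x + g y true x)%:E = 1)%E.

Definition fX_Y (g : bool -> bool -> X -> R) (x : X) (y : bool) : R :=
  g y false x + g y true x.

Definition Pi (g : bool -> bool -> X -> R) (t y : bool) (x : X) : R :=
  g y t x / fX_Y g x y.

(* Pr(Y = 1 | X = x), by Bayes' rule with Pr(Y = 1) = h0 *)
Definition PrY1_X (h0 : R) (g : bool -> bool -> X -> R) (x : X) : R :=
  h0 * fX_Y g x true / (h0 * fX_Y g x true + (1 - h0) * fX_Y g x false).

Definition r (D : design) (h0 : R) (g : bool -> bool -> X -> R) (x : X) (p : R) : R :=
  let q := PrY1_X h0 g x in
  match D with
  | CaseControl =>
      p * (1 - h0) * q / (p * (1 - h0) * q + h0 * (1 - p) * (1 - q))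
  | CasePopulation => p * (1 - h0) / h0 * (q / (1 - q))
  end.

Definition supp_pop (fs : bool -> bool -> X -> R) (x : X) : Prop := 0 < fXs fs x.
Definition supp_obs (g : bool -> bool -> X -> R) (y : bool) (x : X) : Prop :=
  0 < fX_Y g x y.

(* Standing common support assumption; calX := supp_pop fs. *)
Definition common_support fs g : Prop :=
  forall x, (supp_pop fs x <-> supp_obs g false x) /\
            (supp_pop fs x <-> supp_obs g true x).

Definition design_holds (D : design) fs g : Prop :=
  match D with
  | CaseControl =>
      forall t x y, supp_pop fs x ->
        fX_Y g x y = fXs_Ys fs x y /\ Pi g t y x = PrTs_XsYs fs t x y
  | CasePopulation =>
      forall t x, supp_pop fs x ->
        fX_Y g x false = fXs fs x /\ Pi g t false x = PrTs_Xs fs t x /\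
        fX_Y g x true = fXs_Ys fs x true /\ Pi g t true x = PrTs_XsYs fs t x true
  end.

End Defs.

(** Both designs are Bayes' rule in disguise.  The design equations identify
    [r(x, p0)] with the population probability [Pr(Y* = 1 | X* = x)]: the
    prevalence factor in [r] undoes the reweighting of cases and controls
    performed by the sampling.  The denominator is then [Pr(T* = t | X* = x)],
    by the law of total probability in Design 1 and directly from the design
    (since [r(x, 0) = 0]) in Design 2, and the numerator is
    [Pr(Y* = 1 | X* = x) Pr(T* = t | Y* = 1, X* = x)]. *)

From HB Require Import structures.
From mathcomp Require Import all_boot all_order all_algebra.
From mathcomp Require Import all_classical all_reals all_analysis measurable_realfun.
From mathcomp Require Import ring lra.
Set Implicit Arguments. Unset Strict Implicit. Unset Printing Implicit Defensive.
Import Order.TTheory GRing.Theory Num.Theory.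
Local Open Scope ring_scope.

Lemma nneg_divr_gt0 (R : numFieldType) (a b : R) :
  0 <= a -> 0 < a / b -> 0 < a /\ 0 < b.
Proof.
move=> a_ge0 ab_gt0.
have a_gt0 : 0 < a.
  by rewrite lt_def a_ge0 andbT; apply: contraTneq ab_gt0 => ->; rewrite mul0r ltxx.
by split=> //; move: ab_gt0; rewrite pmulr_rgt0 // invr_gt0.
Qed.

Section Population.
Variables (R : realType) (d : measure_display) (X : measurableType d).
Variable fs : bool -> bool -> X -> R.

Definition fYsXs (y : bool) (x : X) : R := fs y false x + fs y true x.

Definition PrYs1_Xs (x : X) : R := fYsXs true x / margX fs x.

Lemma margXE x : margX fs x = fYsXs false x + fYsXs true x.
Proof. by rewrite /margX /fYsXs !addrA. Qed.

Lemma PrTs_Xs_total t x : 0 < fYsXs false x -> 0 < fYsXs true x ->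
  PrTs_Xs fs t x =
    (1 - PrYs1_Xs x) * PrTs_XsYs fs t x false + PrYs1_Xs x * PrTs_XsYs fs t x true.
Proof.
move=> a0_gt0 a1_gt0.
have m_gt0 : 0 < margX fs x by rewrite margXE addr_gt0.
move: a0_gt0 a1_gt0 m_gt0.
rewrite /PrTs_Xs /PrYs1_Xs /PrTs_XsYs margXE /fYsXs => a0_gt0 a1_gt0 m_gt0.
by field; rewrite !gt_eqF.
Qed.

Lemma PrYs1_TsXs_bayes t x :
  fYsXs true x != 0 -> margX fs x != 0 -> fs false t x + fs true t x != 0 ->
  PrYs1_TsXs fs t x = PrYs1_Xs x * PrTs_XsYs fs t x true / PrTs_Xs fs t x.
Proof.
rewrite /PrYs1_TsXs /PrYs1_Xs /PrTs_XsYs /PrTs_Xs /fYsXs => a1_neq0 m_neq0 ft_neq0.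
by field; rewrite a1_neq0 m_neq0 ft_neq0.
Qed.

Lemma PrTs_XsYs1_neq0 t x : (forall y t x, 0 <= fs y t x) ->
  PrTs_XsYs fs t x true != 0 -> fs false t x + fs true t x != 0.
Proof.
move=> fs_ge0 P_neq0.
have f1_neq0 : fs true t x != 0.
  by apply: contraNneq P_neq0; rewrite /PrTs_XsYs => ->; rewrite mul0r.
have f1_gt0 : 0 < fs true t x by rewrite lt_def f1_neq0 fs_ge0.
by rewrite gt_eqF // ltr_wpDl.
Qed.

Lemma PrYs_false_add_true (mu : {measure set X -> \bar R}) :
  is_pop_density mu fs -> PrYs mu fs false + PrYs mu fs true = 1.
Proof.
move=> [fs_ge0 [fs_mes int_margX]].
have fYsXs_mes y : measurable_fun setT (fun x => (fYsXs y x)%:E).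
  by apply/measurable_EFinP; apply: measurable_funD.
have fYsXs_ge0 y x : setT x -> (0 <= (fYsXs y x)%:E)%E.
  by move=> _; rewrite lee_fin addr_ge0.
move: int_margX; under eq_integral do rewrite margXE EFinD.
rewrite ge0_integralD //; [|exact: fYsXs_ge0..].
have := integral_ge0 mu (fYsXs_ge0 false); have := integral_ge0 mu (fYsXs_ge0 true).
rewrite /PrYs -!/(fYsXs _ _).
by case: (\int[mu]_x _)%E => [a| |]; case: (\int[mu]_x _)%E => [b| |] //= _ _ [].
Qed.

End Population.

Section Sampling.
Variables (R : realType) (d : measure_display) (X : measurableType d).
Variables (mu : {measure set X -> \bar R}) (fs g : bool -> bool -> X -> R) (h0 : R).
Hypotheses (fs_pop : is_pop_density mu fs) (h0_01 : 0 < h0 < 1).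
Hypothesis supp : common_support fs g.

Let fs_ge0 : forall y t x, 0 <= fs y t x := proj1 fs_pop.

Lemma supp_obs_pop y x : supp_pop fs x -> supp_obs g y x.
Proof. by have [[to0 _] [to1 _]] := supp x; case: y. Qed.

Lemma CaseControl_gt0 y x : design_holds mu CaseControl fs g -> supp_pop fs x ->
  0 < fYsXs fs y x /\ 0 < PrYs mu fs y.
Proof.
move=> design x_supp; have [fXE _] := design false x y x_supp.
have := supp_obs_pop y x_supp; rewrite /supp_obs fXE.
by apply: nneg_divr_gt0; apply: addr_ge0.
Qed.

Lemma CasePopulation_gt0 x : design_holds mu CasePopulation fs g -> supp_pop fs x ->
  0 < fYsXs fs true x /\ 0 < p0 mu fs.
Proof.
move=> design x_supp; have [_ [_ [fX1E _]]] := design false x x_supp.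
have := supp_obs_pop true x_supp; rewrite /supp_obs fX1E.
by apply: nneg_divr_gt0; apply: addr_ge0.
Qed.

Lemma r_p0_CaseControl x : design_holds mu CaseControl fs g -> supp_pop fs x ->
  r CaseControl h0 g x (p0 mu fs) = PrYs1_Xs fs x.
Proof.
move=> design x_supp.
have [a0_gt0 P0_gt0] := CaseControl_gt0 false design x_supp.
have [a1_gt0 P1_gt0] := CaseControl_gt0 true design x_supp.
have PrYs0E : PrYs mu fs false = 1 - p0 mu fs.
  by rewrite /p0 -(PrYs_false_add_true fs_pop) addrK.
have [fX0E _] := design false x false x_supp.
have [fX1E _] := design false x true x_supp.
move: a0_gt0 a1_gt0 P0_gt0 P1_gt0 h0_01.
rewrite /r /PrY1_X fX0E fX1E /fXs_Ys -/(fYsXs fs false x) -/(fYsXs fs true x).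
rewrite PrYs0E -/(p0 mu fs) /PrYs1_Xs margXE.
move: (p0 mu fs) (fYsXs fs false x) (fYsXs fs true x) => P a0 a1.
move=> a0_gt0 a1_gt0 P0_gt0 P1_gt0 /andP[h0_gt0 h0_lt1].
have h0C_gt0 : 0 < 1 - h0 by rewrite subr_gt0.
field; rewrite addrAC subrr add0r.
by apply/and5P; split; rewrite gt_eqF // ?addr_gt0 // !mulr_gt0.
Qed.

Lemma r_p0_CasePopulation x : design_holds mu CasePopulation fs g -> supp_pop fs x ->
  r CasePopulation h0 g x (p0 mu fs) = PrYs1_Xs fs x.
Proof.
move=> design x_supp.
have [a1_gt0 P_gt0] := CasePopulation_gt0 design x_supp.
have [fX0E [_ [fX1E _]]] := design false x x_supp.
rewrite /r /PrY1_X fX0E fX1E /fXs_Ys /fXs -/(fYsXs fs true x) -/(p0 mu fs) /PrYs1_Xs.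
move: x_supp a1_gt0 P_gt0 h0_01; rewrite /supp_pop /fXs.
move: (p0 mu fs) (margX fs x) (fYsXs fs true x) => P m a1.
move=> m_gt0 a1_gt0 P_gt0 /andP[h0_gt0 h0_lt1].
have h0C_gt0 : 0 < 1 - h0 by rewrite subr_gt0.
field; rewrite addrAC subrr add0r.
by apply/and5P; split; rewrite gt_eqF // ?addr_gt0 // !mulr_gt0.
Qed.

End Sampling.

Theorem lemmaA2 (R : realType) (d : measure_display) (X : measurableType d)
  (mu : {measure set X -> \bar R})
  (fs g : bool -> bool -> X -> R) (h0 : R) (D : design) :
  is_pop_density mu fs ->
  is_obs_density mu g ->
  0 < h0 < 1 ->
  common_support fs g ->
  (forall x, supp_pop fs x -> forall t y, Pi g t y x != 0) ->
  design_holds mu D fs g ->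
  let p := match D with CaseControl => p0 mu fs | CasePopulation => 0 end in
  forall (t : bool) (x : X), supp_pop fs x ->
    PrYs1_TsXs fs t x =
      r D h0 g x (p0 mu fs) * Pi g t true x /
      (Pi g t false x + r D h0 g x p * (Pi g t true x - Pi g t false x)).
Proof.
move=> fs_pop _ h0_01 supp Pi_neq0 design p t x x_supp; rewrite {}/p.
have m_neq0 : margX fs x != 0 by rewrite gt_eqF.
case: D design => design.
- have [a0_gt0 _] := CaseControl_gt0 fs_pop supp false design x_supp.
  have [a1_gt0 _] := CaseControl_gt0 fs_pop supp true design x_supp.
  have [_ Pi0E] := design t x false x_supp.
  have [_ Pi1E] := design t x true x_supp.
  have ft_neq0 : fs false t x + fs true t x != 0.
    by apply: (PrTs_XsYs1_neq0 (proj1 fs_pop)); rewrite -Pi1E Pi_neq0.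
  rewrite (r_p0_CaseControl fs_pop h0_01 supp design x_supp) Pi0E Pi1E.
  rewrite PrYs1_TsXs_bayes ?(gt_eqF a1_gt0) // (PrTs_Xs_total t a0_gt0 a1_gt0).
  by congr (_ / _); ring.
- have [a1_gt0 _] := CasePopulation_gt0 fs_pop supp design x_supp.
  have [_ [Pi0E [_ Pi1E]]] := design t x x_supp.
  have ft_neq0 : fs false t x + fs true t x != 0.
    by apply: (PrTs_XsYs1_neq0 (proj1 fs_pop)); rewrite -Pi1E Pi_neq0.
  rewrite (r_p0_CasePopulation fs_pop h0_01 supp design x_supp) Pi0E Pi1E.
  by rewrite /r /= !mul0r addr0 PrYs1_TsXs_bayes ?(gt_eqF a1_gt0).
Qed.
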